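(* $\gamma_{2t}(K_2\Box K_3)=4$, $\gamma_{2t}(K_3\Box K_4)=6$, $\gamma_{2t}(K_4\Box K_5)=7$, $\gamma_{2t}(K_5\Box K_6)=9$, $\gamma_{2t}(K_6\Box K_7)=10$, $\gamma_{2t}(K_2\Box K_4)=4$, $\gamma_{2t}(K_3\Box K_5)=6$, $\gamma_{2t}(K_4\Box K_6)=8$, $\gamma_{2t}(K_5\Box K_7)=9$, $\gamma_{2t}(K_6\Box K_8)=11$ and $\gamma_{2t}(K_7\Box K_9)=13$.
   Context: For a graph $G=(V,E)$, a set $S\subseteq V$ is a total $2$-dominating set if every vertex of $V$ (including those in $S$) is adjacent to at least $2$ vertices of $S$; $\gamma_{2t}(G)$ is the minimum cardinality of such a set. $G\Box H$ denotes the Cartesian product: vertex set $V(G)\times V(H)$, with $(u_1,v_1)\sim(u_2,v_2)$ iff either $u_1=u_2$ and $v_1\sim v_2$, or $v_1=v_2$ and $u_1\sim u_2$. $K_n$ is the complete graph on $n$ vertices. *)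

From mathcomp Require Import all_boot.
Set Implicit Arguments. Unset Strict Implicit. Unset Printing Implicit Defensive.

Definition complete_rel (n : nat) : rel 'I_n := fun u v => u != v.

Definition cart_rel (T U : finType) (eG : rel T) (eH : rel U) : rel (T * U) :=
  fun x y => ((x.1 == y.1) && eH x.2 y.2) || ((x.2 == y.2) && eG x.1 y.1).

Definition nbhd (T : finType) (e : rel T) (v : T) : {set T} := [set u | e v u].

Definition total2dom (T : finType) (e : rel T) (S : {set T}) : bool :=
  [forall v, 2 <= #|nbhd e v :&: S|].

Definition is_gamma2t (T : finType) (e : rel T) (k : nat) : Prop :=
  (exists S : {set T}, total2dom e S /\ #|S| = k) /\
  (forall S : {set T}, total2dom e S -> k <= #|S|).

Definition KK (m n : nat) : rel ('I_m * 'I_n) :=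
  @cart_rel (ordinal m) (ordinal n) (@complete_rel m) (@complete_rel n).
Arguments KK m n : clear implicits.
Arguments complete_rel n : clear implicits.

From mathcomp Require Import all_boot.
From mathcomp Require Import zify.
Set Implicit Arguments. Unset Strict Implicit. Unset Printing Implicit Defensive.

(* In K_m [] K_n the vertex (i, j) is adjacent to the rest of row i and of
   column j, so with r_i, c_j the numbers of points of S in row i and column j,
   S is total 2-dominating iff r_i + c_j >= 2 + 2 [(i, j) \in S] everywhere.
   Sorting rows (and columns) by r_i = 0, 1, 2, >= 3 gives linear constraints:
   the lone point of a row with r_i = 1 lies in a column with c_j >= 3, and an
   empty row forces every column to carry >= 2 points.  For the eleven small
   cases these constraints bound |S| below by the size of an explicit set. *)

Section LineCount.
Variables (T I : finType) (S : {set T}) (p : T -> I).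

Definition line_count (i : I) : nat := \sum_(u in S) (p u == i).

Lemma sum_line_count_weighted (f : I -> nat) :
  \sum_i f i * line_count i = \sum_(u in S) f (p u).
Proof.
rewrite /line_count; under eq_bigr do rewrite big_distrr /=.
rewrite exchange_big /=; apply: eq_bigr => u _.
rewrite (bigD1 (p u)) //= eqxx muln1 big1 ?addn0 // => i.
by rewrite eq_sym => /negbTE ->; rewrite muln0.
Qed.

Lemma card_line_count : #|S| = \sum_i line_count i.
Proof.
rewrite (eq_bigr (fun i => 1 * line_count i)) => [|i _]; last by rewrite mul1n.
by rewrite sum_line_count_weighted sum1_card.
Qed.

End LineCount.

Section LineClasses.
Variables (I : finType) (c : I -> nat).

Definition nlines (k : nat) : nat := \sum_i (c i == k).
Definition nlines_gt2 : nat := \sum_i (2 < c i).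
Definition mass_gt2 : nat := \sum_i (2 < c i) * c i.

Lemma nlines_partition : nlines 0 + nlines 1 + nlines 2 + nlines_gt2 = #|I|.
Proof.
rewrite -sum1_card -!big_split; apply: eq_bigr => i _.
by case: (c i) => [|[|[|]]].
Qed.

Lemma sum_nlines : \sum_i c i = nlines 1 + 2 * nlines 2 + mass_gt2.
Proof.
rewrite big_distrr -!big_split; apply: eq_bigr => i _.
by case: (c i) => [|[|[|k]]] //=; rewrite mul1n.
Qed.

Lemma mass_gt2_ge : 3 * nlines_gt2 <= mass_gt2.
Proof.
rewrite big_distrr; apply: leq_sum => i _.
by case: (c i) => [|[|[|k]]] //=; rewrite mul1n.
Qed.

End LineClasses.

Lemma nlines1_le_mass_gt2 (T I J : finType) (S : {set T})
    (p : T -> I) (q : T -> J) :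
  {in S, forall u, 4 <= line_count S p (p u) + line_count S q (q u)} ->
  nlines (line_count S p) 1 <= mass_gt2 (line_count S q).
Proof.
move=> dom.
have -> : nlines (line_count S p) 1
          = \sum_i (line_count S p i == 1) * line_count S p i.
  by apply: eq_bigr => i _; case: eqP => [->|].
rewrite /mass_gt2 !sum_line_count_weighted; apply: leq_sum => u /dom.
by case: eqP => [->|]; lia.
Qed.

Lemma empty_line_dichotomy (I J : finType) (a : I -> nat) (b : J -> nat) :
  (forall i j, 2 <= a i + b j) -> nlines a 0 = 0 \/ nlines b 0 + nlines b 1 = 0.
Proof.
move=> dom; case: (pickP (fun i => a i == 0)) => [i /eqP a_i0 | a_pos].
- right; rewrite -big_split big1 // => j _.
  by have := dom i j; rewrite a_i0; case: (b j) => [|[|]].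
- by left; rewrite /nlines big1 // => i _; rewrite a_pos.
Qed.

Record line_profile := LineProfile {
  prof0 : nat; prof1 : nat; prof2 : nat; prof3 : nat; prof_mass : nat }.

Definition profile_of (I : finType) (c : I -> nat) : line_profile :=
  LineProfile (nlines c 0) (nlines c 1) (nlines c 2) (nlines_gt2 c) (mass_gt2 c).

Definition profile_ok (lines s : nat) (P : line_profile) : Prop :=
  [/\ prof0 P + prof1 P + prof2 P + prof3 P = lines,
      s = prof1 P + 2 * prof2 P + prof_mass P & 3 * prof3 P <= prof_mass P].

Definition profiles_compatible (P Q : line_profile) : Prop :=
  prof1 P <= prof_mass Q /\ (prof0 P = 0 \/ prof0 Q + prof1 Q = 0).

Lemma profile_of_line_count_ok (T I : finType) (S : {set T}) (p : T -> I) :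
  profile_ok #|I| #|S| (profile_of (line_count S p)).
Proof.
split; rewrite /= ?nlines_partition ?mass_gt2_ge //.
by rewrite (card_line_count S p) sum_nlines.
Qed.

Section CliqueProduct.
Variables (m n : nat) (S : {set 'I_m * 'I_n}).
Local Notation rows := (line_count S fst).
Local Notation cols := (line_count S snd).

Lemma KK_adj_row_col (u v : 'I_m * 'I_n) :
  KK m n v u + 2 * (u == v) = (u.1 == v.1) + (u.2 == v.2).
Proof.
case: u v => [a b] [i j]; rewrite /KK /cart_rel /complete_rel /= xpair_eqE.
by rewrite (eq_sym i) (eq_sym j); case: (a == i); case: (b == j).
Qed.

Lemma card_nbhd_KK (v : 'I_m * 'I_n) :
  #|nbhd (KK m n) v :&: S| + 2 * (v \in S) = rows v.1 + cols v.2.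
Proof.
have -> : #|nbhd (KK m n) v :&: S| = \sum_(u in S) KK m n v u.
  rewrite -sum1_card [RHS]big_mkcond [LHS]big_mkcond; apply: eq_bigr => u _.
  by rewrite !inE andbC; case: (u \in S); case: (KK _ _ _ _).
have -> : 2 * (v \in S) = \sum_(u in S) 2 * (u == v).
  rewrite big_mkcond (bigD1 v) //= eqxx big1 ?addn0 => [|u /negbTE->].
    by case: (v \in S).
  by case: (u \in S).
by rewrite -!big_split; apply: eq_bigr => u _; exact: KK_adj_row_col.
Qed.

Lemma total2dom_KKE :
  total2dom (KK m n) S = [forall v, 2 + 2 * (v \in S) <= rows v.1 + cols v.2].
Proof. by apply: eq_forallb => v; rewrite -card_nbhd_KK leq_add2r. Qed.

Lemma KK_line_profiles : total2dom (KK m n) S ->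
  [/\ profile_ok m #|S| (profile_of rows), profile_ok n #|S| (profile_of cols),
      profiles_compatible (profile_of rows) (profile_of cols)
    & profiles_compatible (profile_of cols) (profile_of rows)].
Proof.
rewrite total2dom_KKE => /forallP dom.
have dom_S : {in S, forall u, 4 <= rows u.1 + cols u.2}.
  by move=> u uS; have := dom u; rewrite uS.
have dom_all i j : 2 <= rows i + cols j by have := dom (i, j) => /=; lia.
split;
  rewrite -?[m in profile_ok m](card_ord m) -?[n in profile_ok n](card_ord n).
- exact: profile_of_line_count_ok.
- exact: profile_of_line_count_ok.
- split; first exact: nlines1_le_mass_gt2.
  exact: empty_line_dichotomy.
- split; first by apply: nlines1_le_mass_gt2 => u /dom_S; rewrite addnC.
  by apply: empty_line_dichotomy => j i; rewrite addnC.
Qed.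

Lemma line_count_fst (i : 'I_m) : rows i = \sum_(j < n) ((i, j) \in S).
Proof.
pose F a b : nat := if (a, b) \in S then nat_of_bool (a == i) else 0.
rewrite /line_count big_mkcond (eq_bigr (fun u => F u.1 u.2)) => [|[a b] _] //.
rewrite -(pair_bigA _ F) (bigD1 i) //= [X in _ + X]big1 ?addn0
  => [|a /negbTE ai].
  by apply: eq_bigr => j _; rewrite /F eqxx; case: (_ \in S).
by apply: big1 => j _; rewrite /F ai; case: (_ \in S).
Qed.

Lemma line_count_snd (j : 'I_n) : cols j = \sum_(i < m) ((i, j) \in S).
Proof.
pose F a b : nat := if (a, b) \in S then nat_of_bool (b == j) else 0.
rewrite /line_count big_mkcond (eq_bigr (fun u => F u.1 u.2)) => [|[a b] _] //.
rewrite -(pair_bigA _ F) exchange_big (bigD1 j) //= [X in _ + X]big1 ?addn0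
  => [|b /negbTE bj].
  by apply: eq_bigr => i _; rewrite /F eqxx; case: (_ \in S).
by apply: big1 => i _; rewrite /F bj; case: (_ \in S).
Qed.

End CliqueProduct.

(* Finite sets and big operators are locked and do not compute, so explicit
   witnesses are given, and checked, as lists of (row, column) coordinates. *)
Definition pattern_set m n (l : seq (nat * nat)) : {set 'I_m * 'I_n} :=
  [set u | (nat_of_ord u.1, nat_of_ord u.2) \in l].

Definition pattern_row (l : seq (nat * nat)) n i : nat :=
  sumn [seq nat_of_bool ((i, j) \in l) | j <- iota 0 n].

Definition pattern_col (l : seq (nat * nat)) m j : nat :=
  sumn [seq nat_of_bool ((i, j) \in l) | i <- iota 0 m].

Definition pattern_total2dom m n (l : seq (nat * nat)) : bool :=
  all (fun i => all (fun j =>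
         2 + 2 * ((i, j) \in l) <= pattern_row l n i + pattern_col l m j)
       (iota 0 n)) (iota 0 m).

Definition pattern_card m n (l : seq (nat * nat)) : nat :=
  sumn [seq pattern_row l n i | i <- iota 0 m].

Lemma sum_ord_sumn n (F : nat -> nat) :
  \sum_(i < n) F i = sumn [seq F i | i <- iota 0 n].
Proof. by rewrite sumnE big_map -(big_mkord xpredT) /index_iota subn0. Qed.

Section Pattern.
Variables (m n : nat) (l : seq (nat * nat)).
Local Notation S := (pattern_set m n l).

Lemma pattern_set_rows (i : 'I_m) : line_count S fst i = pattern_row l n i.
Proof.
rewrite line_count_fst /pattern_row -sum_ord_sumn.
by apply: eq_bigr => j _; rewrite inE.
Qed.

Lemma pattern_set_cols (j : 'I_n) : line_count S snd j = pattern_col l m j.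
Proof.
rewrite line_count_snd /pattern_col -sum_ord_sumn.
by apply: eq_bigr => i _; rewrite inE.
Qed.

Lemma pattern_set_total2dom :
  pattern_total2dom m n l -> total2dom (KK m n) S.
Proof.
move=> /allP dom; rewrite total2dom_KKE; apply/forallP => -[i j] /=.
rewrite pattern_set_rows pattern_set_cols inE /=.
have in_iota k (x : 'I_k) : nat_of_ord x \in iota 0 k.
  by rewrite mem_iota ltn_ord.
by have /allP := dom i (in_iota _ i); apply; exact: in_iota.
Qed.

Lemma card_pattern_set : #|S| = pattern_card m n l.
Proof.
rewrite (card_line_count S fst) /pattern_card -sum_ord_sumn.
by apply: eq_bigr => i _; exact: pattern_set_rows.
Qed.

End Pattern.

Lemma is_gamma2t_KK m n k (l : seq (nat * nat)) :
  pattern_total2dom m n l -> pattern_card m n l = k ->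
  (forall s (P Q : line_profile), profile_ok m s P -> profile_ok n s Q ->
     profiles_compatible P Q -> profiles_compatible Q P -> k <= s) ->
  is_gamma2t (KK m n) k.
Proof.
move=> dom card_l profile_bound; split.
  by exists (pattern_set m n l); rewrite card_pattern_set card_l;
    split; first exact: pattern_set_total2dom.
by move=> S /KK_line_profiles [Pr Pc Crc Ccr]; exact: profile_bound Crc Ccr.
Qed.

Ltac profile_arith :=
  move=> ? [? ? ? ? ?] [? ? ? ? ?] [/= ? ? ?] [/= ? ? ?] [/= ? ?] [/= ? ?]; lia.

Theorem proposition13 :
  is_gamma2t (KK 2 3) 4 /\ is_gamma2t (KK 3 4) 6 /\ is_gamma2t (KK 4 5) 7 /\
  is_gamma2t (KK 5 6) 9 /\ is_gamma2t (KK 6 7) 10 /\ is_gamma2t (KK 2 4) 4 /\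
  is_gamma2t (KK 3 5) 6 /\ is_gamma2t (KK 4 6) 8 /\ is_gamma2t (KK 5 7) 9 /\
  is_gamma2t (KK 6 8) 11 /\ is_gamma2t (KK 7 9) 13.
Proof.
repeat match goal with |- _ /\ _ => split end;
  [ apply: (is_gamma2t_KK (l := [:: (0, 0); (0, 1); (1, 0); (1, 1)]))
  | apply: (is_gamma2t_KK
      (l := [:: (0, 1); (0, 2); (1, 0); (1, 2); (2, 0); (2, 1)]))
  | apply: (is_gamma2t_KK
      (l := [:: (0, 1); (0, 2); (0, 3); (0, 4); (1, 0); (2, 0); (3, 0)]))
  | apply: (is_gamma2t_KK
      (l := [:: (0, 1); (0, 2); (0, 3); (0, 4); (0, 5);
                (1, 0); (2, 0); (3, 0); (4, 0)]))
  | apply: (is_gamma2t_KK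
      (l := [:: (0, 1); (0, 2); (0, 3); (1, 4); (1, 5); (1, 6);
                (2, 0); (3, 0); (4, 0); (5, 0)]))
  | apply: (is_gamma2t_KK (l := [:: (0, 0); (0, 1); (1, 0); (1, 1)]))
  | apply: (is_gamma2t_KK
      (l := [:: (0, 1); (0, 2); (1, 0); (1, 2); (2, 0); (2, 1)]))
  | apply: (is_gamma2t_KK
      (l := [:: (0, 0); (0, 1); (1, 0); (1, 1); (2, 2); (2, 3); (3, 2); (3, 3)]))
  | apply: (is_gamma2t_KK
      (l := [:: (0, 1); (0, 2); (0, 3); (1, 4); (1, 5); (1, 6);
                (2, 0); (3, 0); (4, 0)]))
  | apply: (is_gamma2t_KK
      (l := [:: (0, 1); (0, 2); (0, 3); (1, 4); (1, 5); (1, 6); (1, 7);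
                (2, 0); (3, 0); (4, 0); (5, 0)]))
  | apply: (is_gamma2t_KK
      (l := [:: (0, 2); (0, 3); (0, 4); (0, 5); (0, 6); (0, 7); (0, 8);
                (1, 0); (2, 0); (3, 0); (4, 1); (5, 1); (6, 1)])) ];
  by [|profile_arith].
Qed.
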